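(* Let $S,P,Q$ be pairwise disjoint finite sets and let $\mathcal{V}_{SP}$, $\mathcal{V}_{PQ}$ be vector spaces over a field on $S\uplus P$ and $P\uplus Q$ respectively. 1. There exist a subset $P'\subseteq P$, a vector space $\mathcal{V}_{SP'}$ on $S\uplus P'$ which is a minor of $\mathcal{V}_{SP}$ and a vector space $\mathcal{V}_{P'Q}$ on $P'\uplus Q$ which is a minor of $\mathcal{V}_{PQ}$, such that $\mathcal{V}_{SP}\leftrightarrow\mathcal{V}_{PQ}=\mathcal{V}_{SP'}\leftrightarrow\mathcal{V}_{P'Q}$ and $$|P'|=r((\mathcal{V}_{SP}+\mathcal{V}_{PQ})\circ P)-r((\mathcal{V}_{SP}\cap\mathcal{V}_{PQ})\times P)=r(\mathcal{V}_{SP}+\mathcal{V}_{PQ})-r(\mathcal{V}_{SP}\cap\mathcal{V}_{PQ}).$$ 2. If $\mathcal{V}_{SP}\circ P=\mathcal{V}_{PQ}\circ P$ and $\mathcal{V}_{SP}\times P=\mathcal{V}_{PQ}\times P$, then $r((\mathcal{V}_{SP}+\mathcal{V}_{PQ})\circ P)-r((\mathcal{V}_{SP}\cap\mathcal{V}_{PQ})\times P)=r((\mathcal{V}_{SP}\leftrightarrow\mathcal{V}_{PQ})\circ S)-r((\mathcal{V}_{SP}\leftrightarrow\mathcal{V}_{PQ})\times S)$. Moreover, for any vector space $\mathcal{V}_{SQ}$ on $S\uplus Q$ and any vector spaces $\mathcal{V}_{SP},\mathcal{V}_{PQ}$ with $\mathcal{V}_{SP}\leftrightarrow\mathcal{V}_{PQ}=\mathcal{V}_{SQ}$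 one has $|P|\ge r(\mathcal{V}_{SQ}\circ S)-r(\mathcal{V}_{SQ}\times S)$; and, when $\mathcal{V}_{SP}\circ P=\mathcal{V}_{PQ}\circ P$ and $\mathcal{V}_{SP}\times P=\mathcal{V}_{PQ}\times P$, equality $|P|=r(\mathcal{V}_{SQ}\circ S)-r(\mathcal{V}_{SQ}\times S)$ holds iff $|P|=r(\mathcal{V}_{SP}\circ P)=r(\mathcal{V}_{PQ}\circ P)$ and $r(\mathcal{V}_{SP}\times P)=r(\mathcal{V}_{PQ}\times P)=0$.
   Context: A vector on a finite set $X$ is a function $X\to\mathbb{F}$; a vector space on $X$ is a subspace of $\mathbb{F}^X$; $r(\cdot)$ denotes dimension. Vectors on $X\uplus Y$ are written $(f_X,f_Y)$. For $\mathcal{V}_{SP}$ on $S\uplus P$: the restriction $\mathcal{V}_{SP}\circ S:=\{f_S:(f_S,f_P)\in\mathcal{V}_{SP}\}$ and the contraction $\mathcal{V}_{SP}\times S:=\{f_S:(f_S,0_P)\in\mathcal{V}_{SP}\}$; a minor of $\mathcal{V}_X$ is a space $\mathcal{V}_X\circ A\times B$ with $B\subseteq A\subseteq X$. For $S,P,Q$ pairwise disjoint: $\mathcal{V}_{SP}+\mathcal{V}_{PQ}:=\{(f_S,f_P,0_Q)+(0_S,g_P,g_Q):(f_S,f_P)\in\mathcal{V}_{SP},(g_P,g_Q)\in\mathcal{V}_{PQ}\}$ on $S\uplus P\uplus Q$; $\mathcal{V}_{SP}\cap\mathcal{V}_{PQ}:=\{(f_S,h_P,g_Q):(f_S,h_P)\in\mathcal{V}_{SP},(h_P,g_Q)\in\mathcal{V}_{PQ}\}$;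 the matched composition $\mathcal{V}_{SP}\leftrightarrow\mathcal{V}_{PQ}:=\{(f_S,g_Q):\exists h_P,\ (f_S,h_P)\in\mathcal{V}_{SP},(h_P,g_Q)\in\mathcal{V}_{PQ}\}$ on $S\uplus Q$. *)

From HB Require Import structures.
From mathcomp Require Import all_boot all_order all_algebra.
Set Implicit Arguments. Unset Strict Implicit. Unset Printing Implicit Defensive.
Import GRing.Theory.
Local Open Scope ring_scope.

(* Vectors on a subset A of a finite universe T are modelled as functions
   T -> F vanishing outside A; (f_X, f_Y) on X ⊎ Y is the function equal to
   f_X on X and f_Y on Y. *)
Section VecSpaces.
Variables (F : fieldType) (T : finType).

Definition vecT := {ffun T -> F^o}.

Definition projf (A : {set T}) (f : vecT) : vecT :=
  [ffun x => if x \in A then f x else 0].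

Lemma projf_linear A : linear (projf A).
Proof.
move=> a f g; apply/ffunP=> x; rewrite /projf !ffunE.
by case: (x \in A); rewrite ?ffunE ?scaler0 ?addr0.
Qed.

HB.instance Definition _ A :=
  GRing.isLinear.Build F vecT vecT _ (projf A) (projf_linear A).

Definition projl (A : {set T}) : 'End(vecT) := linfun (projf A).

Definition spc (A : {set T}) : {vspace vecT} := limg (projl A).

Definition onV (A : {set T}) (V : {vspace vecT}) : bool := (V <= spc A)%VS.

Definition restr (A : {set T}) (V : {vspace vecT}) : {vspace vecT} :=
  (projl A @: V)%VS.

(* contraction V × B = { f_B : (f_B, 0) ∈ V } (for V on a superset of B) *)
Definition contr (B : {set T}) (V : {vspace vecT}) : {vspace vecT} :=
  (V :&: spc B)%VS.

(* V_SP ∩ V_PQ on S ⊎ P ⊎ Q *)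
Definition vcap (S P Q : {set T}) (V1 V2 : {vspace vecT}) : {vspace vecT} :=
  ((projl (S :|: P) @^-1: V1) :&: (projl (P :|: Q) @^-1: V2)
     :&: spc (S :|: P :|: Q))%VS.

Definition matched (S P Q : {set T}) (V1 V2 : {vspace vecT}) : {vspace vecT} :=
  restr (S :|: Q) (vcap S P Q V1 V2).

End VecSpaces.

From HB Require Import structures.
From mathcomp Require Import all_boot all_order all_algebra.
From mathcomp Require Import zify.
Set Implicit Arguments. Unset Strict Implicit. Unset Printing Implicit Defensive.
Import GRing.Theory Num.Theory.
Local Open Scope ring_scope.

(* Flipping the sign
   of the Q-part maps (V_SP + V_PQ) x (S ⊎ Q) isomorphically onto the
   composition, which together with rank-nullity gives the second equality of
   part 1.  For the first one, choose coordinates Z ⊆ P on which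
   K := (V_SP ∩ V_PQ) x P projects bijectively onto F^Z, then coordinates
   Y ⊆ P \ Z such that (V_SP + V_PQ) ∘ P projects injectively to F^(Y ∪ Z);
   by rank-nullity |Y| = r((V_SP + V_PQ) ∘ P) - r(K).
   Contracting Z and deleting P \ (Y ∪ Z) does not change the composition:
   the Z-part of a common h_P can be cancelled by a vector of K, and the
   (Y ∪ Z)-part determines h_P.  Part 2: under its hypotheses the composition
   has the same restriction and contraction on S as V_SP, and
   r(V_SP ∘ S) - r(V_SP x S) = r(V_SP ∘ P) - r(V_SP x P) <= |P|. *)

Section Coordinates.
Variables (F : fieldType) (T : finType).
Implicit Types (A B C X : {set T}) (f : vecT F T) (U V : {vspace vecT F T}).
Local Notation projl := (projl F).
Local Notation spc := (spc F).

Lemma projlE A f t : projl A f t = if t \in A then f t else 0.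
Proof. by rewrite lfunE /= ffunE. Qed.

Lemma memv_spcP A f : reflect (forall t, t \notin A -> f t = 0) (f \in spc A).
Proof.
apply: (iffP memv_imgP) => [[g _ ->] t tA | f0]; first by rewrite projlE (negPf tA).
exists f; rewrite ?memvf //; apply/ffunP=> t; rewrite projlE.
by case: ifP => // /negbT /f0.
Qed.

Lemma projl_spc A f : projl A f \in spc A.
Proof. exact: memv_img (memvf f). Qed.

Lemma projl_id A f : f \in spc A -> projl A f = f.
Proof.
by move/memv_spcP=> f0; apply/ffunP=> t; rewrite projlE; case: ifP => // /negbT /f0.
Qed.

Lemma spcS A B : A \subset B -> (spc A <= spc B)%VS.
Proof.
move=> AB; apply/subvP=> f /memv_spcP f0; apply/memv_spcP=> t tB.
by apply: f0; apply: contra tB; apply: (subsetP AB).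
Qed.

Lemma projl_projl_l A B f : A \subset B -> projl A (projl B f) = projl A f.
Proof.
by move=> AB; apply/ffunP=> t; rewrite !projlE; case: ifP => // /(subsetP AB) ->.
Qed.

Lemma projl_projl_r A B f : B \subset A -> projl A (projl B f) = projl B f.
Proof. by move=> BA; rewrite projl_id // (subvP (spcS BA)) ?projl_spc. Qed.

Lemma projl_spc_disjoint A B f : [disjoint A & B] -> f \in spc B -> projl A f = 0.
Proof.
move=> dAB /memv_spcP f0; apply/ffunP=> t; rewrite projlE ffunE.
by case: ifP => // tA; rewrite f0 // (disjointFr dAB tA).
Qed.

Lemma projl_projl_disjoint A B f : [disjoint A & B] -> projl A (projl B f) = 0.
Proof. by move=> dAB; rewrite (projl_spc_disjoint dAB) ?projl_spc. Qed.

Lemma projlU A B f : [disjoint A & B] ->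
  projl (A :|: B) f = projl A f + projl B f.
Proof.
move=> dAB; apply/ffunP=> t; rewrite !ffunE !projlE in_setU.
case tA: (t \in A) => /=; last by rewrite add0r.
by rewrite (disjointFr dAB tA) addr0.
Qed.

Lemma restr_sub_spc A V : (restr A V <= spc A)%VS.
Proof. by apply/subvP=> _ /memv_imgP [f _ ->]; apply: projl_spc. Qed.

Lemma lker_projlU A B : lker (projl (A :|: B)) = (lker (projl A) :&: lker (projl B))%VS.
Proof.
apply/vspaceP=> f; rewrite memv_cap !memv_ker; apply/eqP/andP => [f0 | [/eqP fA /eqP fB]].
  by rewrite -(projl_projl_l f (subsetUl A B)) -(projl_projl_l f (subsetUr A B)) f0 !linear0.
apply/ffunP=> t; move/ffunP/(_ t): fA; move/ffunP/(_ t): fB.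
by rewrite !projlE !ffunE in_setU; case: (t \in A); case: (t \in B).
Qed.

Lemma spc_lker_projl A B : (spc A :&: lker (projl B))%VS = spc (A :\: B).
Proof.
apply/vspaceP=> f; rewrite memv_cap memv_ker; apply/andP/memv_spcP.
  case=> /memv_spcP fA /eqP/ffunP fB t; rewrite in_setD negb_and negbK.
  by case/orP=> [tB | /fA //]; move: (fB t); rewrite projlE tB ffunE.
move=> f0; split; first by apply/memv_spcP=> t tA; rewrite f0 // in_setD (negPf tA) andbF.
by apply/eqP/ffunP=> t; rewrite projlE ffunE; case: ifP => // tB; rewrite f0 // in_setD tB.
Qed.

Lemma dim_onV_split A B V : [disjoint A & B] -> onV (A :|: B) V ->
  \dim V = (\dim (contr B V) + \dim (restr A V))%N.
Proof.
move=> dAB /subvP VAB; rewrite -(limg_ker_dim (projl A) V); congr (\dim _ + _)%N.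
apply/vspaceP=> f; rewrite !memv_cap memv_ker; apply: andb_id2l => /VAB fAB.
apply/eqP/idP => [fA0 | fB]; last by rewrite (projl_spc_disjoint dAB fB).
by rewrite -(projl_id fAB) projlU // fA0 add0r projl_spc.
Qed.

Definition delta (x : T) : vecT F T := [ffun t => (t == x)%:R].

Lemma spc1 x : spc [set x] = <[delta x]>%VS.
Proof.
apply/vspaceP=> f; apply/memv_spcP/vlineP => [f0 | [k ->] t].
  exists (f x); apply/ffunP=> t; rewrite !ffunE.
  case: eqP => [-> | /eqP tx]; first exact: (esym (mulr1 _)).
  by rewrite scaler0 f0 // in_set1.
by rewrite in_set1 !ffunE => /negPf ->; rewrite scaler0.
Qed.

Lemma dim_spcU A B : [disjoint A & B] ->
  \dim (spc (A :|: B)) = (\dim (spc A) + \dim (spc B))%N.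
Proof.
move=> dAB; rewrite -dimv_disjoint_sum.
  congr (\dim _); apply/eqP; rewrite eqEsubv subv_add !spcS ?subsetUl ?subsetUr // !andbT.
  by apply/subvP=> f fAB; rewrite -(projl_id fAB) projlU // memv_add ?projl_spc.
apply/eqP; rewrite -subv0; apply/subvP=> f; rewrite memv_cap memv0 => /andP [fA fB].
by rewrite -(projl_id fA) (projl_spc_disjoint dAB fB).
Qed.

Lemma dim_spc A : \dim (spc A) = #|A|.
Proof.
have [n] := ubnP #|A|; elim: n A => // n IH A; rewrite ltnS => An.
have [-> | [x xA]] := set_0Vmem A.
  rewrite cards0; apply/eqP; rewrite dimv_eq0 -subv0; apply/subvP=> f /memv_spcP f0.
  by rewrite memv0; apply/eqP/ffunP=> t; rewrite f0 ?in_set0 ?ffunE.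
rewrite -(setD1K xA) dim_spcU ?disjoints1 ?setD11 // cardsU1 setD11 spc1 dim_vline.
rewrite (IH (A :\ x)); last by rewrite (cardsD1 x A) xA in An.
suff -> : delta x != 0 by [].
by apply/eqP=> /ffunP/(_ x)/eqP; rewrite !ffunE eqxx oner_eq0.
Qed.

Lemma dim_restr_le A V : (\dim (restr A V) <= #|A|)%N.
Proof. by rewrite -dim_spc dimvS ?restr_sub_spc. Qed.

Lemma exists_coordinates C U : (U <= spc C)%VS ->
  exists Y : {set T}, [/\ Y \subset C, #|Y| = \dim U & (U :&: lker (projl Y))%VS = 0%VS].
Proof.
have [n] := ubnP (\dim U); elim: n C U => // n IH C U; rewrite ltnS => Un UC.
have [-> | U_neq0] := eqVneq U 0%VS.
  by exists set0; rewrite sub0set cards0 dimv0 cap0v.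
have uU : vpick U \in U := memv_pick U.
have [y uy] : exists y, vpick U y != 0.
  apply/existsP; apply: contraR U_neq0; rewrite -vpick0 => /existsPn u0.
  by apply/eqP/ffunP=> t; rewrite ffunE; apply/eqP/negbNE.
have yC : y \in C.
  by apply: contraR uy => yC; apply/eqP; move/subvP/(_ _ uU)/memv_spcP: UC; apply.
set U' := (U :&: lker (projl [set y]))%VS.
have dimU : \dim U = (\dim U').+1.
  rewrite -(limg_ker_dim (projl [set y]) U) -addn1; congr (_ + _)%N.
  apply/eqP; rewrite eqn_leq (leq_trans (dim_restr_le _ _)) ?cards1 // lt0n dimv_eq0.
  apply: contraNneq uy => /eqP; rewrite -subv0 => /subvP/(_ _ (memv_img (projl [set y]) uU)).
  by rewrite memv0 => /eqP/ffunP/(_ y); rewrite projlE set11 ffunE => ->.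
have U'C : (U' <= spc (C :\ y))%VS by rewrite -spc_lker_projl capvS.
have [|Y [YC cardY U'Y]] := IH _ _ _ U'C; first by rewrite -dimU.
exists (y |: Y); split.
- by rewrite subUset sub1set yC (subset_trans YC) ?subD1set.
- have yY : y \notin Y by apply/negP=> /(subsetP YC); rewrite setD11.
  by rewrite cardsU1 yY cardY dimU.
- by rewrite lker_projlU capvA.
Qed.

Lemma exists_nested_coordinates C K R : (K <= R)%VS -> (R <= spc C)%VS ->
  exists Y Z : {set T}, [/\ Y \subset C :\: Z, Z \subset C,
    (spc Z <= restr Z K)%VS, (R :&: lker (projl (Y :|: Z)))%VS = 0%VS &
    (#|Y| + \dim K)%N = \dim R].
Proof.
move=> KR RC; have [Z [ZC cardZ KZ0]] := exists_coordinates (subv_trans KR RC).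
have RZC : (R :&: lker (projl Z) <= spc (C :\: Z))%VS by rewrite -spc_lker_projl capvS.
have [Y [YCZ cardY RZY0]] := exists_coordinates RZC.
have /eqP KZ : restr Z K == spc Z.
  by rewrite eqEdim restr_sub_spc dim_spc /restr (limg_dim_eq KZ0) cardZ /=.
have RZ : \dim (restr Z R) = \dim K.
  apply/eqP; rewrite eqn_leq -{1}cardZ dim_restr_le -{1}cardZ -dim_spc -KZ.
  exact/dimvS/limgS.
exists Y, Z; split => //.
- by rewrite KZ subvv.
- by rewrite setUC lker_projlU capvA.
- by rewrite cardY -RZ limg_ker_dim.
Qed.

Definition minor_on (B : {set T}) (W V : {vspace vecT F T}) (X : {set T}) : Prop :=
  onV B W /\ exists A : {set T}, [/\ B \subset A, A \subset X & W = contr B (restr A V)].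

Lemma minor_on_contr_restr A B X V : B \subset A -> A \subset X ->
  minor_on B (contr B (restr A V)) V X.
Proof. by move=> BA AX; split; [apply: capvSr | exists A]. Qed.

Lemma dim_restr_contr_swap A B V : [disjoint A & B] -> onV (A :|: B) V ->
  (\dim (restr A V) + \dim (contr B V) = \dim (restr B V) + \dim (contr A V))%N.
Proof.
move=> dAB VAB; have VBA : onV (B :|: A) V by rewrite /onV setUC.
have := dim_onV_split dAB VAB; rewrite disjoint_sym in dAB.
by rewrite (dim_onV_split dAB VBA) addnC [in RHS]addnC => ->.
Qed.

End Coordinates.

Lemma disjointsU (T : finType) (A B C : {set T}) :
  [disjoint A :|: B & C] = [disjoint A & C] && [disjoint B & C].
Proof. by rewrite -!setI_eq0 setIUl setU_eq0. Qed.

Section Gluing.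
Variables (F : fieldType) (T : finType) (S P Q : {set T}) (V1 V2 : {vspace vecT F T}).
Hypotheses (dSP : [disjoint S & P]) (dPQ : [disjoint P & Q]) (dSQ : [disjoint S & Q]).
Hypotheses (V1_on : onV (S :|: P) V1) (V2_on : onV (P :|: Q) V2).
Local Notation projl := (projl F).
Local Notation spc := (spc F).
Local Notation vc := (vcap S P Q V1 V2).
Local Notation M := (matched S P Q V1 V2).

Let dPS : [disjoint P & S]. Proof. by rewrite disjoint_sym. Qed.
Let dQS : [disjoint Q & S]. Proof. by rewrite disjoint_sym. Qed.
Let dQP : [disjoint Q & P]. Proof. by rewrite disjoint_sym. Qed.
Let dSP_Q : [disjoint S :|: P & Q]. Proof. by rewrite disjointsU dSQ. Qed.
Let dS_PQ : [disjoint S & P :|: Q].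
Proof. by rewrite disjoint_sym disjointsU dPS. Qed.

Lemma projlQ_V1 a : a \in V1 -> projl Q a = 0.
Proof. by move/(subvP V1_on); apply: projl_spc_disjoint; rewrite disjoint_sym. Qed.

Lemma projlS_V2 b : b \in V2 -> projl S b = 0.
Proof. by move/(subvP V2_on); apply: projl_spc_disjoint dS_PQ. Qed.

Lemma projl_split_V1 a : a \in V1 -> projl S a + projl P a = a.
Proof. by move/(subvP V1_on)=> aSP; rewrite -projlU ?projl_id. Qed.

Lemma projl_split_V2 b : b \in V2 -> projl P b + projl Q b = b.
Proof. by move/(subvP V2_on)=> bPQ; rewrite -projlU ?projl_id. Qed.

Lemma mem_vcapP x :
  reflect (exists a b, [/\ a \in V1, b \in V2, projl P a = projl P b & x = a + projl Q b])
          (x \in vc).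
Proof.
rewrite /vcap !memv_cap -!memv_preim -andbA.
apply: (iffP and3P) => [[xV1 xV2 xSPQ] | [a [b [aV1 bV2 ab ->]]]].
  exists (projl (S :|: P) x), (projl (P :|: Q) x); split => //.
    by rewrite !projl_projl_l ?subsetUr ?subsetUl.
  by rewrite projl_projl_l ?subsetUr // -projlU // projl_id.
split.
- rewrite linearD /= (projl_id (subvP V1_on _ aV1)).
  by rewrite (projl_spc_disjoint dSP_Q (projl_spc _ _)) addr0.
- rewrite linearD /= projlU // ab projlQ_V1 // addr0.
  by rewrite projl_projl_r ?subsetUr // projl_split_V2.
- apply: memvD; first exact: (subvP (spcS _ (subsetUl _ _))) _ (subvP V1_on _ aV1).
  exact: (subvP (spcS _ (subsetUr _ _))) _ (projl_spc _ _).
Qed.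

Lemma mem_matchedP m :
  reflect (exists a b, [/\ a \in V1, b \in V2, projl P a = projl P b & m = projl S a + projl Q b])
          (m \in M).
Proof.
have glueE a b : a \in V1 -> projl (S :|: Q) (a + projl Q b) = projl S a + projl Q b.
  by move=> aV1; rewrite linearD /= projlU // projlQ_V1 // addr0 projl_projl_r ?subsetUr.
apply: (iffP memv_imgP) => [[_ /mem_vcapP [a [b [aV1 bV2 ab ->]]] ->] | [a [b [aV1 bV2 ab ->]]]].
  by exists a, b; rewrite glueE.
by exists (a + projl Q b); [apply/mem_vcapP; exists a, b | rewrite glueE].
Qed.

Lemma contr_vcap_sub : (contr P vc <= V1 :&: V2)%VS.
Proof.
apply/subvP=> k; rewrite !memv_cap -!memv_preim => /andP [/andP [/andP [k1 k2] _] kP].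
rewrite -[k in k \in V1](projl_id (subvP (spcS _ (subsetUr S P)) _ kP)) k1.
by rewrite -[k in k \in V2](projl_id (subvP (spcS _ (subsetUl P Q)) _ kP)) k2.
Qed.

Lemma restr_matched_sub : (restr S M <= restr S V1)%VS.
Proof.
apply/subvP=> _ /memv_imgP [_ /mem_matchedP [a [b [aV1 _ _ ->]]] ->].
by rewrite linearD /= projl_projl_l // projl_projl_disjoint // addr0 memv_img.
Qed.

Lemma contr_sub_matched : (contr S V1 <= contr S M)%VS.
Proof.
apply/subvP=> a /memv_capP [aV1 aS]; rewrite memv_cap aS andbT.
apply/mem_matchedP; exists a, 0; split; rewrite ?mem0v // linear0.
  exact: projl_spc_disjoint dPS aS.
by rewrite addr0 projl_id.
Qed.

Lemma restr_matched : restr P V1 = restr P V2 -> restr S M = restr S V1.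
Proof.
move=> E; apply/eqP; rewrite eqEsubv restr_matched_sub /=.
apply/subvP=> _ /memv_imgP [a aV1 ->].
have /memv_imgP [b bV2 ab] : projl P a \in restr P V2 by rewrite -E memv_img.
apply/memv_imgP; exists (projl S a + projl Q b); first by apply/mem_matchedP; exists a, b.
by rewrite linearD /= projl_projl_l // projl_projl_disjoint // addr0.
Qed.

Lemma contr_matched : contr P V1 = contr P V2 -> contr S M = contr S V1.
Proof.
move=> E; apply/eqP; rewrite eqEsubv contr_sub_matched andbT.
apply/subvP=> _ /memv_capP [/mem_matchedP [a [b [aV1 bV2 ab ->]]] mS].
have Qb : projl Q b = 0.
  move: (projl_spc_disjoint dQS mS).
  by rewrite linearD /= projl_projl_disjoint // add0r projl_projl_l.
have bV1 : b \in V1.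
  have : b \in contr P V2 by rewrite memv_cap bV2 -(projl_split_V2 bV2) Qb addr0 projl_spc.
  by rewrite -E => /memv_capP [].
rewrite memv_cap mS andbT Qb addr0.
have -> : projl S a = a - b.
  by rewrite -[a in a - b](projl_split_V1 aV1) -[b in _ - b](projl_split_V2 bV2) Qb addr0 ab addrK.
exact: memvB.
Qed.

Lemma restr_sum : restr P V1 = restr P V2 -> restr P (V1 + V2) = restr P V1.
Proof. by rewrite /restr limgD => ->; rewrite addvv. Qed.

Lemma contr_vcap : contr P V1 = contr P V2 -> contr P vc = contr P V1.
Proof.
move=> E; apply/vspaceP=> x; rewrite [LHS]memv_cap [RHS]memv_cap; apply: andb_id2r => xP.
have Qx : projl Q x = 0 by rewrite (projl_spc_disjoint dQP xP).
apply/mem_vcapP/idP => [[a [b [aV1 _ _ xE]]] | xV1].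
  by move: Qx; rewrite xE linearD /= projlQ_V1 // add0r projl_projl_l // => Qb; rewrite Qb addr0.
have : x \in contr P V1 by rewrite memv_cap xV1.
by rewrite E => /memv_capP [xV2 _]; exists x, x; rewrite Qx addr0.
Qed.

Lemma dim_restr_matched_le : (\dim (restr S M) <= #|P| + \dim (contr S M))%N.
Proof.
have := dim_restr_contr_swap dSP V1_on; have := dim_restr_le P V1.
have := dimvS restr_matched_sub; have := dimvS contr_sub_matched; lia.
Qed.

Lemma dim_contr_sum_matched : \dim (contr (S :|: Q) (V1 + V2)) = \dim M.
Proof.
pose flip := (projl S - projl Q)%R.
have flipE x : flip x = projl S x - projl Q x by rewrite add_lfunE opp_lfunE.
have dim_flip U : (U <= spc (S :|: Q))%VS -> \dim (flip @: U) = \dim U.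
  move=> /subvP USQ; apply: limg_dim_eq; apply/eqP; rewrite -subv0; apply/subvP=> x.
  rewrite memv_cap memv_ker memv0 flipE subr_eq0 => /andP [/USQ xSQ /eqP SQx].
  have Sx : projl S x = 0.
    by rewrite -[LHS](projl_projl_l x (subxx S)) SQx projl_projl_disjoint.
  by rewrite -(projl_id xSQ) projlU // -SQx Sx addr0.
have flip_sum : (flip @: contr (S :|: Q) (V1 + V2) <= M)%VS.
  apply/subvP=> _ /memv_imgP [_ /memv_capP [/memv_addP [a aV1 [b bV2 ->]] abSQ] ->].
  apply/mem_matchedP; exists a, (- b); split; rewrite ?memvN //.
    apply/eqP; rewrite linearN /= -addr_eq0 -linearD /=.
    by rewrite (projl_spc_disjoint _ abSQ) // disjoint_sym disjointsU dSP.
  by rewrite flipE !linearD /= (projlS_V2 bV2) (projlQ_V1 aV1) linearN oppr0 add0r addr0.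
have flip_matched : (flip @: M <= contr (S :|: Q) (V1 + V2))%VS.
  apply/subvP=> _ /memv_imgP [_ /mem_matchedP [a [b [aV1 bV2 ab ->]]] ->].
  have -> : flip (projl S a + projl Q b) = projl S a - projl Q b.
    rewrite flipE !linearD /= (projl_projl_l a (subxx S)) (projl_projl_l b (subxx Q)).
    by rewrite (projl_projl_disjoint b dSQ) (projl_projl_disjoint a dQS) oppr0 add0r addr0.
  have flipm_eq : projl S a - projl Q b = a - b.
    by rewrite -[a in a - b](projl_split_V1 aV1) -[b in _ - b](projl_split_V2 bV2) ab addrKA.
  apply/memv_capP; split.
    by rewrite flipm_eq memv_add ?memvN.
  apply: memvB; first exact: (subvP (spcS _ (subsetUl S Q))) _ (projl_spc S a).
  exact: (subvP (spcS _ (subsetUr S Q))) _ (projl_spc Q b).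
apply/eqP; rewrite eqn_leq -{1}(dim_flip _ (capvSr _ _)) -{2}(dim_flip _ (restr_sub_spc _ _)).
by rewrite !dimvS.
Qed.

Lemma dim_restr_sum_vcap :
  (\dim (restr P (V1 + V2)) + \dim vc = \dim (V1 + V2) + \dim (contr P vc))%N.
Proof.
have dSQ_P : [disjoint S :|: Q & P] by rewrite disjointsU dSP dQP.
have dP_SQ : [disjoint P & S :|: Q] by rewrite disjoint_sym.
have sum_on : onV (P :|: (S :|: Q)) (V1 + V2).
  rewrite /onV setUCA setUA subv_add (subv_trans V1_on) ?spcS ?subsetUl //.
  by rewrite (subv_trans V2_on) ?spcS // -setUA subsetUr.
have vc_on : onV (S :|: Q :|: P) vc by rewrite /onV setUAC capvSr.
rewrite (dim_onV_split dP_SQ sum_on) (dim_onV_split dSQ_P vc_on).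
by rewrite dim_contr_sum_matched /matched (addnC (\dim (contr P _))) addnCA addnA.
Qed.

End Gluing.

Section Reduction.
Variables (F : fieldType) (T : finType) (S P Q : {set T}) (V1 V2 : {vspace vecT F T}).
Hypotheses (dSP : [disjoint S & P]) (dPQ : [disjoint P & Q]) (dSQ : [disjoint S & Q]).
Hypotheses (V1_on : onV (S :|: P) V1) (V2_on : onV (P :|: Q) V2).
Local Notation projl := (projl F).
Local Notation spc := (spc F).
Local Notation vc := (vcap S P Q V1 V2).
Local Notation M := (matched S P Q V1 V2).

Section Pivots.
Variables (Y Z : {set T}).
Hypotheses (YP : Y \subset P) (ZP : Z \subset P) (dYZ : [disjoint Y & Z]).
Hypothesis ZK : (spc Z <= restr Z (contr P vc))%VS.
Hypothesis R0 : (restr P (V1 + V2) :&: lker (projl (Y :|: Z)))%VS = 0%VS.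
Local Notation V1' := (contr (S :|: Y) (restr (S :|: Y :|: Z) V1)).
Local Notation V2' := (contr (Y :|: Q) (restr (Y :|: Q :|: Z) V2)).
Local Notation M' := (matched S Y Q V1' V2').

Let dYQ : [disjoint Y & Q]. Proof. by rewrite (disjointWl YP). Qed.
Let dSY_Z : [disjoint S :|: Y & Z]. Proof. by rewrite disjointsU dYZ (disjointWr ZP). Qed.
Let dYQ_Z : [disjoint Y :|: Q & Z].
Proof. by rewrite disjointsU dYZ disjoint_sym (disjointWl ZP). Qed.
Let V1'_on : onV (S :|: Y) V1'. Proof. exact: capvSr. Qed.
Let V2'_on : onV (Y :|: Q) V2'. Proof. exact: capvSr. Qed.

Lemma matched_sub_reduced : (M <= M')%VS.
Proof.
apply/subvP=> _ /(mem_matchedP dPQ dSQ V1_on V2_on) [a [b [aV1 bV2 ab ->]]].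
apply/(mem_matchedP dYQ dSQ V1'_on V2'_on).
have /memv_imgP [k kK Zak] := subvP ZK _ (projl_spc Z a).
have /memv_capP [kV1 kV2] := subvP (contr_vcap_sub S P Q V1 V2) _ kK.
have kP : k \in spc P := subvP (capvSr _ _) _ kK.
have Zak0 : projl Z (a - k) = 0 by rewrite linearB /= Zak subrr.
have Zbk0 : projl Z (b - k) = 0.
  by rewrite linearB /= -(projl_projl_l b ZP) -ab projl_projl_l // Zak subrr.
exists (projl (S :|: Y) (a - k)), (projl (Y :|: Q) (b - k)); split.
- rewrite memv_cap projl_spc andbT -[projl _ _]addr0 -Zak0 -projlU //.
  exact/memv_img/memvB.
- rewrite memv_cap projl_spc andbT -[projl _ _]addr0 -Zbk0 -projlU //.
  exact/memv_img/memvB.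
- have abk : projl P (a - k) = projl P (b - k) by rewrite !linearB /= ab.
  rewrite !projl_projl_l ?subsetUl ?subsetUr //.
  by rewrite -(projl_projl_l (a - k) YP) abk projl_projl_l.
- rewrite !projl_projl_l ?subsetUl ?subsetUr // !linearB /=.
  by rewrite (projl_spc_disjoint dSP kP) (projl_spc_disjoint _ kP) 1?disjoint_sym // !subr0.
Qed.

Lemma reduced_sub_matched : (M' <= M)%VS.
Proof.
apply/subvP=> m /(mem_matchedP dYQ dSQ V1'_on V2'_on) [a' [b' []]].
case/memv_capP=> /memv_imgP [a aV1 ->] aSY; case/memv_capP=> /memv_imgP [b bV2 ->] bYQ.
have [SSYZ YSYZ ZSYZ] :
    [/\ S \subset S :|: Y :|: Z, Y \subset S :|: Y :|: Z & Z \subset S :|: Y :|: Z].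
  by split; apply/subsetP=> t; rewrite !inE => ->; rewrite ?orbT.
have [YYQZ QYQZ ZYQZ] :
    [/\ Y \subset Y :|: Q :|: Z, Q \subset Y :|: Q :|: Z & Z \subset Y :|: Q :|: Z].
  by split; apply/subsetP=> t; rewrite !inE => ->; rewrite ?orbT.
rewrite !projl_projl_l // => Yab ->.
apply/(mem_matchedP dPQ dSQ V1_on V2_on); exists a, b; split => //.
have Za : projl Z a = 0.
  by rewrite -(projl_projl_l a ZSYZ) (projl_spc_disjoint _ aSY) // disjoint_sym.
have Zb : projl Z b = 0.
  by rewrite -(projl_projl_l b ZYQZ) (projl_spc_disjoint _ bYQ) // disjoint_sym.
apply/eqP; rewrite -subr_eq0 -linearB /= -memv0 -R0 memv_cap memv_ker memv_img /=.
  by rewrite projl_projl_l ?subUset ?YP // projlU // !linearB /= Yab Za Zb !subrr addr0.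
by rewrite memv_add ?memvN.
Qed.

End Pivots.

Lemma exists_matched_minors :
  exists (P' : {set T}) (V1' V2' : {vspace vecT F T}),
  [/\ P' \subset P, minor_on (S :|: P') V1' V1 (S :|: P), minor_on (P' :|: Q) V2' V2 (P :|: Q),
      M = matched S P' Q V1' V2' & (#|P'| + \dim (contr P vc))%N = \dim (restr P (V1 + V2))].
Proof.
have KR : (contr P vc <= restr P (V1 + V2))%VS.
  apply/subvP=> k kK; have /memv_capP [kV1 _] := subvP (contr_vcap_sub S P Q V1 V2) _ kK.
  rewrite -(projl_id (subvP (capvSr _ _) _ kK)).
  exact/memv_img/(subvP (addvSl V1 V2)).
have [Y [Z [YPZ ZP ZK R0 cardY]]] := exists_nested_coordinates KR (restr_sub_spc _ _).
have YP : Y \subset P := subset_trans YPZ (subsetDl P Z).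
have dYZ : [disjoint Y & Z] by rewrite disjoints_subset (subset_trans YPZ) ?subsetDr.
exists Y, (contr (S :|: Y) (restr (S :|: Y :|: Z) V1)).
exists (contr (Y :|: Q) (restr (Y :|: Q :|: Z) V2)).
split => //; last by apply/eqP; rewrite eqEsubv matched_sub_reduced ?reduced_sub_matched.
- by apply: minor_on_contr_restr; rewrite ?subsetUl // -setUA setUS // subUset YP.
- by apply: minor_on_contr_restr; rewrite ?subsetUl // setUAC setSU // subUset YP.
Qed.

End Reduction.

Theorem theorem4 (F : fieldType) (T : finType) (S P Q : {set T})
  (VSP VPQ : {vspace vecT F T}) :
  [disjoint S & P] -> [disjoint P & Q] -> [disjoint S & Q] ->
  onV (S :|: P) VSP -> onV (P :|: Q) VPQ ->
  (* part 1 *)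
  (exists (P' : {set T}) (VSP' VPQ' : {vspace vecT F T}),
     [/\ P' \subset P,
         onV (S :|: P') VSP' /\
         (exists A : {set T}, [/\ S :|: P' \subset A, A \subset S :|: P &
                                  VSP' = contr (S :|: P') (restr A VSP)]),
         onV (P' :|: Q) VPQ' /\
         (exists A : {set T}, [/\ P' :|: Q \subset A, A \subset P :|: Q &
                                  VPQ' = contr (P' :|: Q) (restr A VPQ)]),
         matched S P Q VSP VPQ = matched S P' Q VSP' VPQ' &
         (#|P'|%:Z = (\dim (restr P (VSP + VPQ)%VS))%:Z
                     - (\dim (contr P (vcap S P Q VSP VPQ)))%:Z
          /\ (\dim (restr P (VSP + VPQ)%VS))%:Z
               - (\dim (contr P (vcap S P Q VSP VPQ)))%:Z
             = (\dim (VSP + VPQ)%VS)%:Z - (\dim (vcap S P Q VSP VPQ))%:Z)])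
  /\
  (* part 2 *)
  ((restr P VSP = restr P VPQ -> contr P VSP = contr P VPQ ->
     (\dim (restr P (VSP + VPQ)%VS))%:Z
       - (\dim (contr P (vcap S P Q VSP VPQ)))%:Z
     = (\dim (restr S (matched S P Q VSP VPQ)))%:Z
       - (\dim (contr S (matched S P Q VSP VPQ)))%:Z)
   /\
   (forall VSQ : {vspace vecT F T},
      onV (S :|: Q) VSQ -> matched S P Q VSP VPQ = VSQ ->
      (#|P|%:Z >= (\dim (restr S VSQ))%:Z - (\dim (contr S VSQ))%:Z)
      /\
      (restr P VSP = restr P VPQ -> contr P VSP = contr P VPQ ->
        (#|P|%:Z = (\dim (restr S VSQ))%:Z - (\dim (contr S VSQ))%:Z
         <->
         [/\ #|P| = \dim (restr P VSP), \dim (restr P VSP) = \dim (restr P VPQ),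
             \dim (contr P VSP) = 0%N & \dim (contr P VPQ) = 0%N])))).
Proof.
move=> dSP dPQ dSQ VSP_on VPQ_on.
have VSP_swap := dim_restr_contr_swap dSP VSP_on.
split.
  have sum_vcap := dim_restr_sum_vcap dSP dPQ dSQ VSP_on VPQ_on.
  have [P' [VSP' [VPQ' [P'P VSP'_minor VPQ'_minor M_eq cardP']]]] :=
    exists_matched_minors dSP dPQ dSQ VSP_on VPQ_on.
  by exists P', VSP', VPQ'; split => //; split; lia.
split.
  by move=> rE cE; rewrite restr_sum // contr_vcap // restr_matched // contr_matched //; lia.
move=> VSQ _ <-; split.
  by rewrite lerBlDr -PoszD lez_nat dim_restr_matched_le.
move=> rE cE; rewrite restr_matched // contr_matched // -rE -cE.
have rP_le := dim_restr_le P VSP.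
by split=> [cardP | [cardP _ cP0 _]]; first split; lia.
Qed.
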